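(* Let $r_2\geq 3$ and let $c$ be an integer with $1\leq c\leq \frac{r_2-1}{2}$. Then there is no graph with parameters $(r_2,r_3)$ where $r_3=\binom{r_2}{2}-c$.
   Context: All graphs are finite, simple and undirected. The $K_3$-degree of a vertex $v$ is the number of triangles of $G$ containing $v$. A graph $G$ has parameters $(r_2,r_3)$ if every vertex has degree $r_2$ and every vertex has $K_3$-degree $r_3$. *)

From mathcomp Require Import all_boot.
Set Implicit Arguments. Unset Strict Implicit. Unset Printing Implicit Defensive.

Definition simple_graph (T : finType) (e : rel T) : Prop :=
  symmetric e /\ irreflexive e.

Definition nbhd (T : finType) (e : rel T) (v : T) : {set T} := [set y | e v y].
Definition degree (T : finType) (e : rel T) (v : T) : nat := #|nbhd e v|.

(* K3-degree: number of triangles containing v, i.e. number of 2-subsets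
   {y,z} of the neighbourhood of v with y adjacent to z. *)
Definition k3_degree (T : finType) (e : rel T) (v : T) : nat :=
  #|[set S : {set T} | (#|S| == 2) && (S \subset nbhd e v) &&
       [forall y in S, forall z in S, (y != z) ==> e y z]]|.

Definition has_params (T : finType) (e : rel T) (r2 r3 : nat) : Prop :=
  forall v : T, degree e v = r2 /\ k3_degree e v = r3.

From mathcomp Require Import all_boot zify.

(* Call x and y twins when their closed neighbourhoods N[x] and N[y]
   coincide.  Every neighbourhood N(u) misses exactly c pairs.  A neighbour w
   of u that is not a twin of u has a non-neighbour x in N(u), since N[u] and
   N[w] have the same size, and the whole twin class of x lies among the
   non-neighbours of w in N(u).  Counting the missing pairs of N(u) from their
   endpoints thus gives (r2 + 1 - |tw u|) * min |tw| <= 2c; as 2c < r2 this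
   first forces every twin class to have size at least 2, and then at least
   r2 + 1 - c.  A missing pair {w, x} of N(u) yields three pairwise disjoint
   twin classes tw u, tw w, tw x inside N[u], so 3 (r2 + 1 - c) <= r2 + 1,
   which contradicts 2c <= r2 - 1. *)

Set Implicit Arguments.
Unset Strict Implicit.
Unset Printing Implicit Defensive.

Lemma card_set_in_sum (T : finType) (B : {set T}) (P : pred T) :
  #|[set y in B | P y]| = \sum_(y in B) P y.
Proof.
rewrite -sum1_card [LHS]big_mkcond [RHS]big_mkcond /=.
by apply: eq_bigr => y _; rewrite !inE; case: (y \in B); case: (P y).
Qed.

Lemma sum_card_incident (T : finType) (A : {set T}) (F : {set {set T}}) :
  \sum_(x in A) #|[set S in F | x \in S]| = \sum_(S in F) #|S :&: A|.
Proof.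
under eq_bigr do rewrite card_set_in_sum.
rewrite exchange_big; apply: eq_bigr => S _.
rewrite -card_set_in_sum; apply: eq_card => x.
by rewrite !inE andbC.
Qed.

Lemma sum_card_incident_uniform (T : finType) (A : {set T})
    (F : {set {set T}}) k :
  (forall S, S \in F -> S \subset A /\ #|S| = k) ->
  \sum_(x in A) #|[set S in F | x \in S]| = k * #|F|.
Proof.
move=> unifF; rewrite sum_card_incident mulnC -sum_nat_const.
by apply: eq_bigr => S /unifF[/setIidPl -> ->].
Qed.

Section ClosedNeighbourhoods.

Variables (T : finType) (e : rel T).
Hypotheses (e_sym : symmetric e) (e_irr : irreflexive e).

Definition cnbhd (u : T) : {set T} := u |: nbhd e u.

Definition twins (u : T) : {set T} := [set x | cnbhd x == cnbhd u].

Definition nonadj_nbhd (u w : T) : {set T} :=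
  [set x in nbhd e u | (x != w) && ~~ e w x].

Definition triangle_pairs (u : T) : {set {set T}} :=
  [set S : {set T} | (#|S| == 2) && (S \subset nbhd e u) &&
     [forall y in S, forall z in S, (y != z) ==> e y z]].

Definition nonedge_pairs (u : T) : {set {set T}} :=
  [set S : {set T} | S \subset nbhd e u & #|S| == 2] :\: triangle_pairs u.

Lemma in_nbhd u x : (x \in nbhd e u) = e u x.
Proof. by rewrite inE. Qed.

Lemma in_cnbhd u x : (x \in cnbhd u) = (x == u) || e u x.
Proof. by rewrite !inE. Qed.

Lemma cnbhd_sym u x : (x \in cnbhd u) = (u \in cnbhd x).
Proof. by rewrite !in_cnbhd eq_sym e_sym. Qed.

Lemma card_cnbhd u : #|cnbhd u| = (degree e u).+1.
Proof. by rewrite cardsU1 in_nbhd e_irr. Qed.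

Lemma twins_refl u : u \in twins u.
Proof. by rewrite inE. Qed.

Lemma twins_sub_cnbhd u a : a \in cnbhd u -> twins a \subset cnbhd u.
Proof.
move=> au; apply/subsetP => y; rewrite inE => /eqP cNy.
by rewrite cnbhd_sym cNy -cnbhd_sym.
Qed.

Lemma disjoint_twins a b z :
  z \in cnbhd a -> z \notin cnbhd b -> [disjoint twins a & twins b].
Proof.
move=> za zb; rewrite -setI_eq0; apply/eqP/setP => y; rewrite !inE.
by apply/negP => /andP[/eqP ya /eqP yb]; move: za zb; rewrite -ya yb => ->.
Qed.

Lemma card_nbhd_diff_twins u :
  #|nbhd e u :\: twins u| = #|cnbhd u| - #|twins u|.
Proof.
have -> : nbhd e u :\: twins u = cnbhd u :\: twins u.
  apply/setP => x; rewrite !inE.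
  by case: (@eqP _ x u) => [->|_] /=; rewrite ?eqxx.
by rewrite cardsD (setIidPr (twins_sub_cnbhd _)) // in_cnbhd eqxx.
Qed.

Lemma card_nonedge_pairs u :
  #|nonedge_pairs u| = 'C(degree e u, 2) - k3_degree e u.
Proof.
have sub :
    triangle_pairs u \subset [set S : {set T} | S \subset nbhd e u & #|S| == 2].
  by apply/subsetP => S; rewrite !inE => /andP[/andP[-> ->] _].
by rewrite cardsD (setIidPr sub) cards_draws.
Qed.

Lemma nonedge_pairsP u (S : {set T}) :
  reflect (exists w x, [/\ S = [set w; x], w \in nbhd e u, x \in nbhd e u,
                           w != x & ~~ e w x])
          (S \in nonedge_pairs u).
Proof.
rewrite !inE; apply: (iffP andP) => [[+ /andP[SN S2]]|].
  rewrite S2 SN /= => /forallPn[w]; rewrite negb_imply => /andP[wS].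
  move=> /forallPn[x]; rewrite !negb_imply => /andP[xS /andP[wx nwx]].
  exists w, x; split=> //; try exact: (subsetP SN).
  apply/eqP; rewrite eq_sym eqEcard cards2 wx (eqP S2) leqnn andbT.
  by rewrite subUset !sub1set wS xS.
move=> [w [x [-> wN xN wx nwx]]].
have wxN : [set w; x] \subset nbhd e u by rewrite subUset !sub1set wN xN.
rewrite cards2 wx wxN; split=> //=.
apply/forallPn; exists w; rewrite !inE eqxx negb_imply /=.
by apply/forallPn; exists x; rewrite !inE eqxx orbT wx (negbTE nwx).
Qed.

Lemma card_nonadj_nbhd_le u w : w \in nbhd e u ->
  #|nonadj_nbhd u w| <= #|[set S in nonedge_pairs u | w \in S]|.
Proof.
move=> wN.
have pair_inj : {in nonadj_nbhd u w &, injective (fun x => [set w; x])}.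
  move=> x y; rewrite !inE => /and3P[xN xw nwx] _ wx_wy.
  have : x \in [set w; y] by rewrite -wx_wy !inE eqxx orbT.
  by rewrite !inE (negbTE xw) => /eqP.
rewrite -(card_in_imset pair_inj); apply/subset_leq_card/subsetP.
move=> S /imsetP[x + ->]; rewrite inE => /and3P[xN xw nwx].
rewrite inE set21 andbT; apply/nonedge_pairsP.
by exists w, x; split=> //; rewrite eq_sym.
Qed.

Lemma sum_card_nonadj_nbhd u :
  \sum_(w in nbhd e u) #|nonadj_nbhd u w| <= 2 * #|nonedge_pairs u|.
Proof.
rewrite -(@sum_card_incident_uniform _ (nbhd e u)); last first.
  move=> _ /nonedge_pairsP[w [x [-> wN xN wx _]]].
  by rewrite subUset !sub1set wN xN cards2 wx.
by apply: leq_sum => w; apply: card_nonadj_nbhd_le.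
Qed.

Lemma nonadj_nbhd_neq0 u w : degree e w = degree e u ->
  w \in nbhd e u -> w \notin twins u -> nonadj_nbhd u w != set0.
Proof.
move=> deg_wu wN; apply: contraNN => /eqP nonadj0.
rewrite inE eq_sym eqEcard !card_cnbhd deg_wu leqnn andbT.
apply/subsetP => x; rewrite !in_cnbhd => /orP[/eqP->|ux].
  by rewrite e_sym -in_nbhd wN orbT.
case: (eqVneq x w) => [-> //|xw] /=; apply: contraT => nwx.
suff : x \in nonadj_nbhd u w by rewrite nonadj0 inE.
by rewrite !inE ux xw nwx.
Qed.

Lemma twins_sub_nonadj_nbhd u w x : w \in nbhd e u ->
  x \in nonadj_nbhd u w -> twins x \subset nonadj_nbhd u w.
Proof.
rewrite !inE => wN /and3P[ux xw nwx].
apply/subsetP => y; rewrite inE => /eqP cNy.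
have wy : w \notin cnbhd y by rewrite cNy in_cnbhd negb_or eq_sym xw e_sym.
have : u \in cnbhd y by rewrite cNy in_cnbhd e_sym ux orbT.
rewrite !inE => /orP[/eqP yu|uy].
  by move: wy; rewrite -yu in_cnbhd wN orbT.
move: wy; rewrite in_cnbhd negb_or => /andP[wy nwy].
by rewrite (e_sym u) uy eq_sym wy (e_sym w) nwy.
Qed.

Lemma card_twins_nonedge u w x :
  w \in nbhd e u -> x \in nbhd e u -> w != x -> ~~ e w x ->
  #|twins u| + #|twins w| + #|twins x| <= #|cnbhd u|.
Proof.
move=> wN xN wx nwx.
have in_cN v : v \in nbhd e u -> v \in cnbhd u.
  by rewrite in_cnbhd -in_nbhd orbC => ->.
have xNw : x \notin cnbhd w by rewrite in_cnbhd negb_or eq_sym wx.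
have wNx : w \notin cnbhd x by rewrite in_cnbhd negb_or wx e_sym.
have /eqP d_uw : twins u :&: twins w == set0.
  by rewrite setI_eq0 (disjoint_twins (in_cN _ xN) xNw).
have /eqP d_ux : twins u :&: twins x == set0.
  by rewrite setI_eq0 (disjoint_twins (in_cN _ wN) wNx).
have /eqP d_wx : twins w :&: twins x == set0.
  by rewrite setI_eq0 (disjoint_twins _ wNx) // in_cnbhd eqxx.
have cardU : #|twins u :|: twins w :|: twins x| =
              #|twins u| + #|twins w| + #|twins x|.
  by rewrite !cardsU setIUl d_ux d_wx d_uw setU0 cards0 !subn0.
have uNu : u \in cnbhd u by rewrite in_cnbhd eqxx.
have wNu := in_cN _ wN; have xNu := in_cN _ xN.
by rewrite -cardU subset_leq_card // !subUset !twins_sub_cnbhd.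
Qed.

Section RegularNonedgeCount.

Variables r2 c : nat.
Hypothesis degree_r2 : forall u, degree e u = r2.
Hypothesis nonedge_pairs_c : forall u, #|nonedge_pairs u| = c.

Lemma nonadj_nbhd_uniform_bound u k :
  (forall w, w \in nbhd e u :\: twins u -> k <= #|nonadj_nbhd u w|) ->
  (r2.+1 - #|twins u|) * k <= 2 * c.
Proof.
move=> lowM; rewrite -(degree_r2 u) -card_cnbhd -card_nbhd_diff_twins.
rewrite -(nonedge_pairs_c u).
apply: leq_trans (sum_card_nonadj_nbhd u).
rewrite (big_setID (twins u)) /= -sum_nat_const; apply: leq_trans (leq_addl _ _).
exact: leq_sum.
Qed.

Lemma exists_twins_sub_nonadj_nbhd u w : w \in nbhd e u :\: twins u ->
  exists x, twins x \subset nonadj_nbhd u w.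
Proof.
rewrite inE => /andP[wT wN].
have deg_wu : degree e w = degree e u by rewrite !degree_r2.
have /set0Pn[x xM] := nonadj_nbhd_neq0 deg_wu wN wT.
by exists x; apply: twins_sub_nonadj_nbhd.
Qed.

Hypothesis few_nonedges : 2 * c < r2.

Lemma two_le_card_twins u : 2 <= #|twins u|.
Proof.
have lowM w : w \in nbhd e u :\: twins u -> 1 <= #|nonadj_nbhd u w|.
  case/exists_twins_sub_nonadj_nbhd => x /subset_leq_card; apply: leq_trans.
  by rewrite card_gt0; apply/set0Pn; exists x; apply: twins_refl.
by have := nonadj_nbhd_uniform_bound lowM; lia.
Qed.

Lemma card_twins_lower_bound u : r2.+1 <= #|twins u| + c.
Proof.
have lowM w : w \in nbhd e u :\: twins u -> 2 <= #|nonadj_nbhd u w|.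
  case/exists_twins_sub_nonadj_nbhd => x /subset_leq_card; apply: leq_trans.
  exact: two_le_card_twins.
by have := nonadj_nbhd_uniform_bound lowM; lia.
Qed.

End RegularNonedgeCount.

End ClosedNeighbourhoods.

Theorem theorem3p6 (r2 c : nat) :
  3 <= r2 -> 1 <= c -> 2 * c <= r2 - 1 ->
  forall (T : finType) (e : rel T), simple_graph e -> 0 < #|T| ->
    ~ has_params e r2 ('C(r2, 2) - c).
Proof.
move=> r2_ge3 c_ge1 c_le T e [e_sym e_irr] /card_gt0P[u _] params.
have degree_r2 v : degree e v = r2 by case: (params v).
have c_le_bin : c <= 'C(r2, 2).
  by case: r2 r2_ge3 c_le {params degree_r2} => // n _; rewrite binS bin1; lia.
have nonedges_c v : #|nonedge_pairs e v| = c.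
  by rewrite card_nonedge_pairs; case: (params v) => -> ->; lia.
have few_nonedges : 2 * c < r2 by lia.
have /card_gt0P[_ /nonedge_pairsP[w [x [_ wN xN wx nwx]]]] : 0 < #|nonedge_pairs e u|.
  by rewrite nonedges_c.
have := card_twins_nonedge e_sym wN xN wx nwx.
rewrite card_cnbhd // degree_r2.
have lb := card_twins_lower_bound e_sym e_irr degree_r2 nonedges_c few_nonedges.
by have := lb u; have := lb w; have := lb x; lia.
Qed.
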